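(* Let $G$ be a graph of order $n\ge 3$ with no isolated vertices and $b_{tR}(G)<\infty$, and suppose $\gamma_{tR}(G)=4$ (equivalently, $\Delta(G)\le n-2$ and there exist adjacent $u,v$ with $N[u]\cup N[v]=V(G)$). Then $b_{tR}(G)=b_t(G)$.
   Context: A TRDF on $G=(V,E)$ is a function $f:V\to\{0,1,2\}$ such that every $v$ with $f(v)=0$ has a neighbor $u$ with $f(u)=2$ and the subgraph induced by $\{v:f(v)>0\}$ has no isolated vertices; $\gamma_{tR}(G)$ is its minimum weight. $b_{tR}(G)$ is the minimum $|E'|$ such that $G-E'$ has no isolated vertices and $\gamma_{tR}(G-E')>\gamma_{tR}(G)$ ($\infty$ if none). $\gamma_t$ is the total domination number, and the total bondage number $b_t(G)$ is the minimum $|E'|$ such that $G-E'$ has no isolated vertices and $\gamma_t(G-E')>\gamma_t(G)$. *)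

From mathcomp Require Import all_boot.
Set Implicit Arguments. Unset Strict Implicit. Unset Printing Implicit Defensive.

Section Graphs.
Variable T : finType.
Implicit Types (E : {set {set T}}).

Definition simple_graph E : Prop := forall e, e \in E -> #|e| = 2.

Definition adj E (u v : T) : bool := (u != v) && ([set u; v] \in E).

Definition no_isolated E : bool := [forall v, [exists u, adj E v u]].

Definition is_TRDF E (f : {ffun T -> 'I_3}) : bool :=
  [forall v, ((f v : nat) == 0) ==> [exists u, adj E v u && ((f u : nat) == 2)]] &&
  [forall v, (0 < f v) ==> [exists u, adj E v u && (0 < f u)]].

Definition weight (f : {ffun T -> 'I_3}) : nat := \sum_(v : T) (f v : nat).

(* minimum weight of a TRDF; the default 2|V| is attained (by f = 2) whenever
   E has no isolated vertices, which is the only case where it is used. *)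
Definition gamma_tR E : nat :=
  \big[minn/(2 * #|T|)]_(f : {ffun T -> 'I_3} | is_TRDF E f) weight f.

Definition is_TDS E (S : {set T}) : bool := [forall v, [exists u, adj E v u && (u \in S)]].

(* total domination number; default |V| is attained (S = V) when no isolated vertices *)
Definition gamma_t E : nat := \big[minn/#|T|]_(S : {set T} | is_TDS E S) #|S|.

Definition feas_tR E (E' : {set {set T}}) : bool :=
  [&& E' \subset E, no_isolated (E :\: E') & gamma_tR E < gamma_tR (E :\: E')].
Definition feas_t E (E' : {set {set T}}) : bool :=
  [&& E' \subset E, no_isolated (E :\: E') & gamma_t E < gamma_t (E :\: E')].

(* bondage number: None encodes infinity (no feasible E') *)
Definition bondage E (feas : pred {set {set T}}) : option nat :=
  if [exists E', feas E'] then Some (\big[minn/#|E|]_(E' | feas E') #|E'|) else None.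

Definition b_tR E : option nat := bondage E (feas_tR E).
Definition b_t E : option nat := bondage E (feas_t E).
End Graphs.

From mathcomp Require Import all_boot zify.
Set Implicit Arguments. Unset Strict Implicit. Unset Printing Implicit Defensive.

(* For n >= 5, gamma_tR(G) <= 4 iff gamma_t(G) <= 2.  A total dominating set S
   gives the TRDF 2 * 1_S.  Conversely, a TRDF f of weight <= 4 on at least five
   vertices takes the value 0 somewhere, so some w has f w = 2 and a neighbour a
   with f a > 0; the other vertices then carry total weight at most 1, which
   forces {w, a} to be totally dominating.  Applied to G and to every G - E', this
   makes the edge sets feasible for b_tR exactly those feasible for b_t.  Finally
   b_tR(G) < oo forces n >= 5, since gamma_tR <= n without isolated vertices. *)

Section BigMin.
Variables (I : finType) (P : pred I) (F : I -> nat) (d : nat).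

Lemma bigminn_le i : P i -> \big[minn/d]_(j | P j) F j <= F i.
Proof.
move=> Pi; have: i \in index_enum I by rewrite mem_index_enum.
elim: (index_enum I) => // x s IHs; rewrite inE big_cons => /orP[/eqP<-|/IHs].
  by rewrite Pi geq_minl.
by case: (P x) => // le_s; apply: leq_trans (geq_minr _ _) le_s.
Qed.

Lemma bigminn_le_idx : \big[minn/d]_(j | P j) F j <= d.
Proof. by apply: (big_rec (fun m => m <= d)) => // i m _ md; rewrite geq_min md orbT. Qed.

Lemma leq_bigminn k :
  k <= d -> (forall i, P i -> k <= F i) -> k <= \big[minn/d]_(j | P j) F j.
Proof. by move=> kd kF; apply: (big_ind (leq k)) => // x y kx ky; rewrite leq_min kx. Qed.

Lemma bigminn_leP k : k < d ->
  reflect (exists2 i, P i & F i <= k) (\big[minn/d]_(j | P j) F j <= k).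
Proof.
move=> kd; apply: (iffP idP) => [|[i Pi Fik]]; last exact: leq_trans (bigminn_le Pi) Fik.
move=> le_k; have /existsP[i /andP[Pi Fik]] : [exists i, P i && (F i <= k)].
  apply: contraLR le_k => /existsPn notF; rewrite -ltnNge leq_bigminn // => i Pi.
  by move: (notF i); rewrite Pi ltnNge.
by exists i.
Qed.

End BigMin.

Section TotalRomanDomination.
Variables (T : finType) (E : {set {set T}}).

Lemma adj_sym u v : adj E u v = adj E v u.
Proof. by rewrite /adj eq_sym setUC. Qed.

Lemma adj_neq u v : adj E u v -> u != v.
Proof. by case/andP. Qed.

Lemma sum_uniq_le (F : T -> nat) s : uniq s -> \sum_(x <- s) F x <= \sum_x F x.
Proof. by move=> s_uniq; rewrite big_uniq // [leqRHS](bigID (mem s)) leq_addr. Qed.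

Definition twice_indicator (S : {set T}) : {ffun T -> 'I_3} :=
  [ffun v => if v \in S then ord_max else ord0].

Lemma twice_indicator_TRDF S : is_TDS E S -> is_TRDF E (twice_indicator S).
Proof.
move=> /forallP S_tds.
have S_dom2 v : [exists u, adj E v u && ((twice_indicator S u : nat) == 2)].
  have /existsP[u /andP[vu uS]] := S_tds v.
  by apply/existsP; exists u; rewrite vu ffunE uS.
apply/andP; split; apply/forallP => v; apply/implyP => _; first exact: S_dom2.
have /existsP[u /andP[vu /eqP fu]] := S_dom2 v.
by apply/existsP; exists u; rewrite vu fu.
Qed.

Lemma weight_twice_indicator S : weight (twice_indicator S) = 2 * #|S|.
Proof.
rewrite /weight; under eq_bigr do rewrite ffunE (fun_if (@nat_of_ord 3)).
by rewrite -big_mkcond sum_nat_const mulnC.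
Qed.

Lemma gamma_tR_le_double_gamma_t : gamma_tR E <= 2 * gamma_t E.
Proof.
apply: (big_ind (fun m => gamma_tR E <= 2 * m)); first exact: bigminn_le_idx.
  by move=> x y; rewrite minnMr leq_min => -> ->.
move=> S S_tds; rewrite -weight_twice_indicator.
exact/bigminn_le/twice_indicator_TRDF.
Qed.

Lemma gamma_tR_le_card : no_isolated E -> gamma_tR E <= #|T|.
Proof.
move=> /forallP E_noiso; pose one : {ffun T -> 'I_3} := [ffun=> inord 1].
have one1 v : (one v : nat) = 1 by rewrite ffunE inordK.
have one_TRDF : is_TRDF E one.
  apply/andP; split; apply/forallP => v; rewrite one1 //=.
  have /existsP[u vu] := E_noiso v.
  by apply/existsP; exists u; rewrite vu one1.
apply: leq_trans (bigminn_le _ _ one_TRDF) _.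
by rewrite /weight (eq_bigr _ (fun v _ => one1 v)) sum_nat_const muln1.
Qed.

Lemma TDS_card_ge2 S : 0 < #|T| -> is_TDS E S -> 2 <= #|S|.
Proof.
case/card_gt0P => v _ /forallP S_tds.
have /existsP[u /andP[_ uS]] := S_tds v.
have /existsP[w /andP[uw wS]] := S_tds u.
apply: leq_trans (subset_leq_card (_ : [set u; w] \subset S)).
  by rewrite cards2 (adj_neq uw).
by apply/subsetP => x; rewrite !inE => /orP[] /eqP ->.
Qed.

Lemma gamma_t_ge2 : 1 < #|T| -> 2 <= gamma_t E.
Proof. by move=> T_gt1; apply: leq_bigminn => // S; apply/TDS_card_ge2/ltnW. Qed.

End TotalRomanDomination.

Section LightTRDF.
Variables (T : finType) (E : {set {set T}}) (f : {ffun T -> 'I_3}).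
Hypotheses (f_TRDF : is_TRDF E f) (f_light : weight f <= 4).

Lemma TRDF_zero_vertex : 4 < #|T| -> exists v, (f v : nat) = 0.
Proof.
move=> T_gt4; have /existsP[v /eqP fv0] : [exists v, (f v : nat) == 0].
  apply: contraLR f_light => /existsPn f_pos; rewrite -ltnNge.
  apply: leq_trans T_gt4 _; rewrite /weight -sum1_card leq_sum // => v _.
  by rewrite lt0n f_pos.
by exists v.
Qed.

Section Pair.
Variables w a : T.
Hypotheses (fw : (f w : nat) = 2) (wa : adj E w a) (fa : 0 < f a).

Let f_sum_le s : uniq s -> \sum_(x <- s) (f x : nat) <= 4.
Proof. by move/(sum_uniq_le (fun x => f x : nat))/leq_trans; apply. Qed.

Lemma pair_TDS : is_TDS E [set w; a].
Proof.
have wa_neq := adj_neq wa.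
(* f w + f a >= 3 leaves weight at most 1 outside {w, a}. *)
have out1 u : u \notin [set w; a] -> (f u : nat) <= 1.
  rewrite !inE negb_or => /andP[uw ua].
  have := @f_sum_le [:: w; a; u]; rewrite !big_cons big_nil fw /= !inE.
  by rewrite !negb_or wa_neq eq_sym uw eq_sym ua; lia.
have out2 u v : u != v -> u \notin [set w; a] -> v \notin [set w; a] ->
    (f u : nat) + f v <= 1.
  move=> uv; rewrite !inE !negb_or => /andP[uw ua] /andP[vw va].
  have := @f_sum_le [:: w; a; u; v]; rewrite !big_cons big_nil fw /= !inE.
  by rewrite !negb_or wa_neq !(eq_sym w) !(eq_sym a) uw ua vw va uv; lia.
case/andP: f_TRDF => /forallP f_dom2 /forallP f_totdom.
apply/forallP => v; case: (eqVneq (f v : nat) 0) => [fv0|fv_neq0].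
  have /existsP[u /andP[vu /eqP fu]] := implyP (f_dom2 v) (introT eqP fv0).
  apply/existsP; exists u; rewrite vu /=; apply: contraLR isT => /out1.
  by rewrite fu.
have [vS|vS] := boolP (v \in [set w; a]).
  move: vS; rewrite !inE => /orP[] /eqP ->; apply/existsP.
    by exists a; rewrite wa !inE eqxx orbT.
  by exists w; rewrite adj_sym wa !inE eqxx.
have := implyP (f_totdom v); rewrite lt0n fv_neq0 => /(_ isT) /existsP[u /andP[vu fu]].
apply/existsP; exists u; rewrite vu /=; apply: contraLR isT => uS.
by have := out2 u v; rewrite eq_sym (adj_neq vu) => /(_ isT uS vS); lia.
Qed.

End Pair.

Lemma TDS2_of_light_TRDF : 4 < #|T| -> exists2 S, is_TDS E S & #|S| <= 2.
Proof.
move=> /TRDF_zero_vertex[v fv0]; case/andP: f_TRDF => /forallP f_dom2 /forallP f_totdom.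
have /existsP[w /andP[_ /eqP fw]] := implyP (f_dom2 v) (introT eqP fv0).
have := implyP (f_totdom w); rewrite fw => /(_ isT) /existsP[a /andP[wa fa]].
by exists [set w; a]; [apply: pair_TDS | rewrite cards2; case: (w != a)].
Qed.

End LightTRDF.

Lemma gamma_tR_le4E (T : finType) (E : {set {set T}}) :
  4 < #|T| -> (gamma_tR E <= 4) = (gamma_t E <= 2).
Proof.
move=> T_gt4; apply/idP/idP => [|t_le2].
  case/bigminn_leP => [|f f_TRDF f_light]; first lia.
  have [S S_tds S_le2] := TDS2_of_light_TRDF f_TRDF f_light T_gt4.
  exact: leq_trans (bigminn_le _ _ S_tds) S_le2.
by apply: leq_trans (gamma_tR_le_double_gamma_t E) _; lia.
Qed.

Theorem mainTheorem6 (T : finType) (E : {set {set T}}) :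
  simple_graph E ->
  3 <= #|T| ->
  no_isolated E ->
  b_tR E <> None ->
  gamma_tR E = 4 ->
  b_tR E = b_t E.
Proof.
move=> _ _ _ b_tR_finite gtR4.
have T_gt4 : 4 < #|T|.
  move: b_tR_finite; rewrite /b_tR /bondage; case: existsP => // -[E' /and3P[_ noiso gtR_lt]] _.
  by apply: leq_trans (gamma_tR_le_card noiso); rewrite -gtR4.
have gt2 : gamma_t E = 2.
  apply/eqP; rewrite eqn_leq -gamma_tR_le4E // gtR4 gamma_t_ge2 //; lia.
have feas_tRE : feas_tR E =1 feas_t E.
  by move=> E'; rewrite /feas_tR /feas_t gtR4 gt2 !ltnNge gamma_tR_le4E.
by rewrite /b_tR /b_t /bondage (eq_existsb feas_tRE) (eq_bigl _ _ feas_tRE).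
Qed.
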